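(* Consider two elementary triangles with the vertices $\mathfrak{z}_0$, $\mathfrak{z}_1=\mathfrak{z}_0+1$, $\mathfrak{z}_2=\mathfrak{z}_0+\omega$, and $\mathfrak{z}_3=\mathfrak{z}_0+1+\omega$. Suppose that \begin{itemize} \item[{\rm (i)}] $|u(\mathfrak{z}_1)-u(\mathfrak{z}_0)|=|u(\mathfrak{z}_2)-u(\mathfrak{z}_0)|$; \item[{\rm (ii)}] $\measuredangle v(\mathfrak{z}_1)v(\mathfrak{z}_0)v(\mathfrak{z}_2)=\vartheta\;\;$ and $\;\;\measuredangle u(\mathfrak{z}_1)u(\mathfrak{z}_0)u(\mathfrak{z}_2)=2\pi-2\vartheta\;\;$ for some $\vartheta$. \end{itemize} Then \begin{equation} |u(\mathfrak{z}_3)-u(\mathfrak{z}_0)|=|u(\mathfrak{z}_1)-u(\mathfrak{z}_0)|=|u(\mathfrak{z}_2)-u(\mathfrak{z}_0)|, \end{equation} and hence \begin{equation} |v(\mathfrak{z}_3)-v(\mathfrak{z}_1)|=|v(\mathfrak{z}_0)-v(\mathfrak{z}_1)|, \qquad |v(\mathfrak{z}_3)-v(\mathfrak{z}_2)|=|v(\mathfrak{z}_0)-v(\mathfrak{z}_2)| \end{equation} and \begin{equation} |w(\mathfrak{z}_3)-w(\mathfrak{z}_1)|=|w(\mathfrak{z}_3)-w(\mathfrak{z}_2)|=|w(\mathfrak{z}_3)-w(\mathfrak{z}_0)|. \end{equation}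
   Context: Here $\omega=e^{2\pi i/3}$, and $u,v,w$ are complex functions on the vertices $k+\ell\omega+m\omega^2$ of the regular triangular lattice forming a solution of the $fgh$--system: on every elementary triangle with consecutive vertices $\mathfrak{z}_a,\mathfrak{z}_b,\mathfrak{z}_c$ such that $\mathfrak{z}_b-\mathfrak{z}_a,\mathfrak{z}_c-\mathfrak{z}_b,\mathfrak{z}_a-\mathfrak{z}_c\in\{1,\omega,\omega^2\}$ one has $\frac{u(\mathfrak{z}_b)-u(\mathfrak{z}_a)}{u(\mathfrak{z}_c)-u(\mathfrak{z}_b)}=\frac{v(\mathfrak{z}_c)-v(\mathfrak{z}_b)}{v(\mathfrak{z}_a)-v(\mathfrak{z}_c)}$ (so that the triangles $u(\mathfrak{z}_a)u(\mathfrak{z}_b)u(\mathfrak{z}_c)$, $v(\mathfrak{z}_b)v(\mathfrak{z}_c)v(\mathfrak{z}_a)$, $w(\mathfrak{z}_c)w(\mathfrak{z}_a)w(\mathfrak{z}_b)$ are similar), and $w(\mathfrak{z}_2')-w(\mathfrak{z}_1')=1/\big((u(\mathfrak{z}_2')-u(\mathfrak{z}_1'))(v(\mathfrak{z}_2')-v(\mathfrak{z}_1'))\big)$ for every edge with $\mathfrak{z}_2'-\mathfrak{z}_1'\in\{1,\omega,\omega^2\}$. *)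

From Stdlib Require Import Reals ZArith.
From Coquelicot Require Import Coquelicot.
Open Scope R_scope.
Open Scope C_scope.

(* Since 1 + omega + omega^2 = 0, every vertex is uniquely a + b*omega with a b : Z;
   we represent it by the pair (a, b). *)
Definition vtx : Type := (Z * Z)%type.

(* the complex point of a vertex: a + b*omega, omega = e^{2 pi i/3} *)
Definition omega : C := ((-1/2)%R, (sqrt 3 / 2)%R).
Definition vpt (z : vtx) : C := RtoC (IZR (fst z)) + RtoC (IZR (snd z)) * omega.

Definition vsub (p q : vtx) : vtx := ((fst p - fst q)%Z, (snd p - snd q)%Z).

(* d is one of 1, omega, omega^2 (= -1 - omega) *)
Definition unit_step (d : vtx) : Prop :=
  d = (1%Z, 0%Z) \/ d = (0%Z, 1%Z) \/ d = ((-1)%Z, (-1)%Z).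

Definition vshift (z : vtx) (a b : Z) : vtx := ((fst z + a)%Z, (snd z + b)%Z).

(* The edge condition w(z2')-w(z1') = 1/((u(z2')-u(z1'))(v(z2')-v(z1')))
   presupposes that u and v differ at the two ends of every edge; we make this
   explicit (it also makes all ratios in the triangle condition well defined). *)
Definition fgh_system (u v w : vtx -> C) : Prop :=
  (forall z1 z2 : vtx, unit_step (vsub z2 z1) -> u z2 <> u z1 /\ v z2 <> v z1) /\
  (forall za zb zc : vtx,
      unit_step (vsub zb za) -> unit_step (vsub zc zb) -> unit_step (vsub za zc) ->
      (u zb - u za) / (u zc - u zb) = (v zc - v zb) / (v za - v zc)) /\
  (forall z1 z2 : vtx, unit_step (vsub z2 z1) ->
      w z2 - w z1 = / ((u z2 - u z1) * (v z2 - v z1))).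

(* Oriented angle: oangle A B C t  means  the angle  ∡ A B C  (at vertex B, rotating
   counterclockwise from the ray B->A to the ray B->C) equals t, measured in [0, 2 pi). *)
Definition oangle (A B Cc : C) (t : R) : Prop :=
  A <> B /\ Cc <> B /\ (0 <= t < 2 * PI)%R /\
  (Cc - B) / (A - B) = RtoC (Cmod ((Cc - B) / (A - B))) * (cos t, sin t).

(** Write [a = u(z1)-u(z0)], [c = u(z3)-u(z0)], [p = v(z1)-v(z0)].  Similarity of
    the triangles [z3 z0 z1] and [z3 z0 z2] under [u] and [v] reads, after cross
    multiplication, [c (v(z1)-v(z3)) = a p] and the same with [z2]; eliminating
    [v(z3)] gives [p (u(z3)-u(z1)) = (v(z2)-v(z0)) (u(z3)-u(z2))].  By (i) and (ii),
    [v(z2)-v(z0) = s e p] and [u(z2)-u(z0) = conj(e)^2 a] with [e = exp(i theta)],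
    [s > 0], so the relation becomes [c (1 - s e) = a (1 - s conj(e))]: the two
    factors are conjugate, hence [|c| = |a|].  The cross relations then give
    [|v(z1)-v(z3)| = |p|] and [|(u(z3)-u(z1))(v(z3)-v(z1))| = |(u(z3)-u(z0))(v(z3)-v(z0))|],
    and the edge equation turns the latter into the statement about [w]. *)
From Stdlib Require Import Reals ZArith Lra.
From Coquelicot Require Import Coquelicot.
Open Scope R_scope.
Open Scope C_scope.

Definition cis (t : R) : C := (cos t, sin t).

Lemma Cmod_sub_swap (x y : C) : Cmod (x - y) = Cmod (y - x).
Proof. replace (x - y) with (- (y - x)) by ring. apply Cmod_opp. Qed.

Lemma Cmod_inv_eq (x y : C) : Cmod x = Cmod y -> Cmod (/ x) = Cmod (/ y).
Proof.
  intros Hxy.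
  destruct (Ceq_dec x 0) as [Hx | Hx].
  - subst x. rewrite Cmod_0 in Hxy.
    assert (Hy : y = 0) by (apply Cmod_eq_0; auto).
    now subst y.
  - assert (Hy : y <> 0).
    { intros Hy. subst y. apply Hx, Cmod_eq_0. now rewrite Hxy, Cmod_0. }
    rewrite !Cmod_inv by assumption. now rewrite Hxy.
Qed.

Lemma Cmult_eq_reg_l {z x y : C} : z <> 0 -> z * x = z * y -> x = y.
Proof.
  intros Hz Hxy.
  rewrite <- (Cmult_1_l x), <- (Cmult_1_l y), <- (Cinv_l z Hz), <- !Cmult_assoc.
  now rewrite Hxy.
Qed.

Lemma cis_mul_conj (t : R) : cis t * Cconj (cis t) = 1.
Proof.
  unfold cis, Cconj; apply injective_projections; simpl.
  - rewrite <- (sin2_cos2 t). unfold Rsqr. ring.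
  - ring.
Qed.

Lemma cis_2PI_sub_double (t : R) : cis (2 * PI - 2 * t) = Cconj (cis t) ^ 2.
Proof.
  unfold cis, Cconj; apply injective_projections; simpl.
  - rewrite cos_minus, cos_2PI, sin_2PI, cos_2a. ring.
  - rewrite sin_minus, cos_2PI, sin_2PI, sin_2a. ring.
Qed.

Lemma Cmod_one_sub_scal_conj (s : R) (z : C) :
  Cmod (1 - s * Cconj z) = Cmod (1 - s * z).
Proof.
  rewrite <- (Cmod_conj (1 - s * z)). f_equal.
  destruct z as [a b]. unfold Cconj; apply injective_projections; simpl; ring.
Qed.

Lemma one_sub_scal_cis_neq0 (s t : R) :
  0 < t <= PI -> 0 <= s -> 1 - s * cis t <> 0.
Proof.
  intros Ht Hs H.
  assert (Hre := f_equal fst H). assert (Him := f_equal snd H).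
  simpl in Hre, Him. ring_simplify in Hre. ring_simplify in Him.
  destruct (Rle_lt_or_eq_dec t PI (proj2 Ht)) as [HtPI | ->].
  - assert (0 < sin t) by (apply sin_gt_0; lra).
    assert (s = 0) by nra. subst s. lra.
  - rewrite cos_PI in Hre. lra.
Qed.

Lemma oangle_rotation {A B Cc : C} {t : R} :
  oangle A B Cc t -> Cc - B = (A - B) * (Cmod ((Cc - B) / (A - B)) * cis t).
Proof.
  intros (HA & _ & _ & Hrot).
  apply Cminus_eq_contra in HA.
  unfold cis. rewrite <- Hrot. field. exact HA.
Qed.

Lemma oangle_isosceles_rotation {A B Cc : C} {t : R} :
  oangle A B Cc t -> Cmod (A - B) = Cmod (Cc - B) -> Cc - B = (A - B) * cis t.
Proof.
  intros Hang Hiso.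
  assert (HA : A - B <> 0) by (apply Cminus_eq_contra, Hang).
  rewrite (oangle_rotation Hang) at 1.
  rewrite Cmod_div, <- Hiso, Rdiv_diag by (auto; apply Rgt_not_eq, Cmod_gt_0, HA).
  f_equal. ring.
Qed.

Lemma oangle_double_complement_range {A B Cc A' B' Cc' : C} {t : R} :
  oangle A B Cc t -> oangle A' B' Cc' (2 * PI - 2 * t) -> 0 < t <= PI.
Proof. intros (_ & _ & ? & _) (_ & _ & ? & _). lra. Qed.

Section Kite.

Context {x0 x1 x3 y0 y1 y3 : C}.

Hypothesis cross : (x3 - x0) * (y1 - y3) = (x1 - x0) * (y1 - y0).

Lemma kite_cross_diag : (y1 - y0) * (x3 - x1) = (x3 - x0) * (y3 - y0).
Proof.
  transitivity ((x3 - x0) * (y1 - y0) - (x1 - x0) * (y1 - y0)); [ring |].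
  rewrite <- cross. ring.
Qed.

Hypothesis diag_neq0 : x3 - x0 <> 0.
Hypothesis diag_eq_side : Cmod (x3 - x0) = Cmod (x1 - x0).

Lemma kite_side : Cmod (y3 - y1) = Cmod (y0 - y1).
Proof.
  pose proof (f_equal Cmod cross) as Hmod.
  rewrite !Cmod_mult, diag_eq_side in Hmod.
  rewrite (Cmod_sub_swap y3), (Cmod_sub_swap y0).
  apply Rmult_eq_reg_l with (1 := Hmod).
  rewrite <- diag_eq_side. apply Rgt_not_eq, Cmod_gt_0, diag_neq0.
Qed.

Lemma kite_Cmod_cross_product :
  Cmod ((x3 - x1) * (y3 - y1)) = Cmod ((x3 - x0) * (y3 - y0)).
Proof.
  rewrite <- kite_cross_diag, !Cmod_mult, kite_side, (Cmod_sub_swap y0).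
  apply Rmult_comm.
Qed.

End Kite.

Lemma rhombus_diagonal {x0 x1 x2 x3 y0 y1 y2 y3 : C} {s t : R} :
  0 < t <= PI -> 0 <= s -> y1 - y0 <> 0 ->
  (x3 - x0) * (y1 - y3) = (x1 - x0) * (y1 - y0) ->
  (x3 - x0) * (y2 - y3) = (x2 - x0) * (y2 - y0) ->
  y2 - y0 = (y1 - y0) * (s * cis t) ->
  x2 - x0 = (x1 - x0) * Cconj (cis t) ^ 2 ->
  Cmod (x3 - x0) = Cmod (x1 - x0).
Proof.
  intros Ht Hs Hy1 cross1 cross2 Hy2 Hx2.
  set (e := cis t) in *.
  assert (Hee : e * Cconj e = 1) by apply cis_mul_conj.
  assert (Hdiag : (y1 - y0) * (x3 - x1) = (y2 - y0) * (x3 - x2)).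
  { now rewrite (kite_cross_diag cross1), (kite_cross_diag cross2). }
  assert (Hconj : (x3 - x0) * (1 - s * e) = (x1 - x0) * (1 - s * Cconj e)).
  { apply (Cmult_eq_reg_l Hy1).
    transitivity ((y1 - y0) * (x3 - x1) - (y2 - y0) * (x3 - x2)
                  + (y1 - y0) * ((x1 - x0) * (1 - s * Cconj e))
                  + (y1 - y0) * s * (x1 - x0) * Cconj e * (1 - e * Cconj e)).
    - replace (x3 - x2) with ((x3 - x0) - (x2 - x0)) by ring.
      rewrite Hy2, Hx2. ring.
    - rewrite Hdiag, Hee. ring. }
  apply (f_equal Cmod) in Hconj.
  rewrite !Cmod_mult, Cmod_one_sub_scal_conj in Hconj.
  apply Rmult_eq_reg_r with (1 := Hconj).
  apply Rgt_not_eq, Cmod_gt_0, one_sub_scal_cis_neq0; assumption.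
Qed.

Lemma fgh_triangle_cross {u v w : vtx -> C} (za zb zc : vtx) :
  fgh_system u v w ->
  unit_step (vsub zb za) -> unit_step (vsub zc zb) -> unit_step (vsub za zc) ->
  (u za - u zb) * (v zc - v za) = (u zc - u zb) * (v zc - v zb).
Proof.
  intros Hfgh Hab Hbc Hca.
  destruct Hfgh as (Hne & Hsim & _).
  destruct (Hne zb zc Hbc) as [Hu _], (Hne zc za Hca) as [_ Hv].
  apply Cminus_eq_contra in Hu, Hv.
  pose proof (Hsim za zb zc Hab Hbc Hca) as Hratio.
  transitivity ((u zb - u za) / (u zc - u zb) * ((u zc - u zb) * (v za - v zc))).
  - field. auto.
  - rewrite Hratio. field. auto.
Qed.

Ltac unit_step_tac :=
  unfold unit_step, vsub, vshift; simpl;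
  first [ left; f_equal; ring | right; left; f_equal; ring | right; right; f_equal; ring ].

Theorem lemma22 (u v w : vtx -> C) (z0 : vtx) :
  fgh_system u v w ->
  Cmod (u (vshift z0 1 0) - u z0) = Cmod (u (vshift z0 0 1) - u z0) ->
  (exists th : R,
      oangle (v (vshift z0 1 0)) (v z0) (v (vshift z0 0 1)) th /\
      oangle (u (vshift z0 1 0)) (u z0) (u (vshift z0 0 1)) (2 * PI - 2 * th)%R) ->
  (Cmod (u (vshift z0 1 1) - u z0) = Cmod (u (vshift z0 1 0) - u z0) /\
   Cmod (u (vshift z0 1 0) - u z0) = Cmod (u (vshift z0 0 1) - u z0)) /\
  (Cmod (v (vshift z0 1 1) - v (vshift z0 1 0)) = Cmod (v z0 - v (vshift z0 1 0)) /\
   Cmod (v (vshift z0 1 1) - v (vshift z0 0 1)) = Cmod (v z0 - v (vshift z0 0 1))) /\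
  (Cmod (w (vshift z0 1 1) - w (vshift z0 1 0)) = Cmod (w (vshift z0 1 1) - w (vshift z0 0 1)) /\
   Cmod (w (vshift z0 1 1) - w (vshift z0 0 1)) = Cmod (w (vshift z0 1 1) - w z0)).
Proof.
  intros Hfgh Hiso [th [Hangv Hangu]].
  pose proof (oangle_double_complement_range Hangv Hangu) as Hth.
  pose proof (fgh_triangle_cross (vshift z0 1 1) z0 (vshift z0 1 0) Hfgh
                ltac:(unit_step_tac) ltac:(unit_step_tac) ltac:(unit_step_tac)) as cross1.
  pose proof (fgh_triangle_cross (vshift z0 1 1) z0 (vshift z0 0 1) Hfgh
                ltac:(unit_step_tac) ltac:(unit_step_tac) ltac:(unit_step_tac)) as cross2.
  destruct (proj1 Hfgh (vshift z0 1 1) z0 ltac:(unit_step_tac)) as [Hu30 _].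
  pose proof (Cminus_eq_contra _ _ (not_eq_sym Hu30)) as Hdiag_neq0.
  assert (Hdiag : Cmod (u (vshift z0 1 1) - u z0) = Cmod (u (vshift z0 1 0) - u z0)).
  { apply (rhombus_diagonal (s := Cmod ((v (vshift z0 0 1) - v z0) / (v (vshift z0 1 0) - v z0)))
             (t := th) Hth (Cmod_ge_0 _)
             (Cminus_eq_contra _ _ (proj1 Hangv)) cross1 cross2 (oangle_rotation Hangv)).
    rewrite <- cis_2PI_sub_double. exact (oangle_isosceles_rotation Hangu Hiso). }
  assert (Hdiag2 : Cmod (u (vshift z0 1 1) - u z0) = Cmod (u (vshift z0 0 1) - u z0))
    by congruence.
  destruct Hfgh as (_ & _ & Hw).
  rewrite (Hw (vshift z0 1 0) (vshift z0 1 1) ltac:(unit_step_tac)),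
          (Hw (vshift z0 0 1) (vshift z0 1 1) ltac:(unit_step_tac)),
          (Cmod_sub_swap _ (w z0)), (Hw (vshift z0 1 1) z0 ltac:(unit_step_tac)).
  repeat split; try assumption.
  - exact (kite_side cross1 Hdiag_neq0 Hdiag).
  - exact (kite_side cross2 Hdiag_neq0 Hdiag2).
  - apply Cmod_inv_eq.
    rewrite (kite_Cmod_cross_product cross1 Hdiag_neq0 Hdiag).
    now rewrite (kite_Cmod_cross_product cross2 Hdiag_neq0 Hdiag2).
  - apply Cmod_inv_eq.
    rewrite (kite_Cmod_cross_product cross2 Hdiag_neq0 Hdiag2).
    f_equal. ring.
Qed.
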